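(* Let $\mu\in\Delta_q$ and $\delta\in(0,1]$. Let $\mathcal R(\mu,\delta)$ be the set of seeds $r=((x_1,p_1),(x_2,p_2),\dots)$ such that $p_{i^*}\ge(1-\delta)\mu(x_{i^*})$, where $i^*=\min\{i: p_i\le\mu(x_i)\}$. Then for every $\upsilon\in\Delta_q$, $$\mathbb P_{r\sim\mathcal R(\mu,\delta)}\big[\mathrm{MinCoupler}(\mu,r)\ne\mathrm{MinCoupler}(\upsilon,r)\big]\ge\frac{1-\upsilon_{\max}}{2}\cdot\mathbb P_{x\sim\mu}\big[\upsilon(x)<(1-\delta)\mu(x)\big],$$ where $\upsilon_{\max}=\max_{x\in[q]}\upsilon(x)$ and $r\sim\mathcal R(\mu,\delta)$ denotes a uniformly random seed conditioned on lying in $\mathcal R(\mu,\delta)$.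
   Context: $\Delta_q$ is the probability simplex on $[q]$. A uniformly random seed is an infinite sequence of i.i.d. pairs $(x_k,p_k)$ with $x_k$ uniform on $[q]$ and $p_k$ uniform on $[0,1]$, independent. $\mathrm{MinCoupler}(\nu,r)$ outputs $x_{i^*}$ with $i^*=\min\{k: p_k\le\nu(x_k)\}$. *)

From HB Require Import structures.
From mathcomp Require Import all_boot all_order all_algebra.
From mathcomp Require Import boolp classical_sets reals constructive_ereal ereal measure lebesgue_measure.
Set Implicit Arguments. Unset Strict Implicit. Unset Printing Implicit Defensive.
Import Order.TTheory GRing.Theory Num.Theory.
Local Open Scope classical_set_scope.
Local Open Scope ring_scope.

Definition in_simplex (R : realType) (q : nat) (nu : 'I_q -> R) : Prop :=
  (forall a, 0 <= nu a) /\ \sum_(a < q) nu a = 1.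

Definition nu_max (R : realType) (q : nat) (nu : 'I_q -> R) : R :=
  \big[Num.max/0]_(a < q) nu a.

Definition unif01 (R : realType) (B : set R) : \bar R :=
  (@lebesgue_measure R) (B `&` `[0%R, 1%R]).

(* A uniformly random seed, modelled on an abstract probability space:
   x k : T -> 'I_q and p k : T -> R (k : nat, indexing from 0) are
   i.i.d. pairs, x k uniform on [q], p k uniform on [0,1], independent. *)
Definition uniform_seed (R : realType) (q : nat) (d : measure_display)
    (T : measurableType d) (P : probability T R)
    (x : nat -> T -> 'I_q) (p : nat -> T -> R) : Prop :=
  (forall k a, measurable (x k @^-1` [set a])) /\
  (forall k, measurable_fun setT (p k)) /\
  (forall (n : nat) (a : nat -> 'I_q) (B : nat -> set R),
     (forall k, measurable (B k)) ->
     P [set t | forall k, (k < n)%N -> x k t = a k /\ B k (p k t)] =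
     (\prod_(k < n) ((q%:R)^-1%:E * unif01 (B k)))%E).

Definition hitb (R : realType) (q : nat) (T : Type) (x : nat -> T -> 'I_q)
    (p : nat -> T -> R) (nu : 'I_q -> R) (t : T) (i : nat) : bool :=
  `[< p i t <= nu (x i t) >].

Definition istar (R : realType) (q : nat) (T : Type) (x : nat -> T -> 'I_q)
    (p : nat -> T -> R) (nu : 'I_q -> R) (t : T) : option nat :=
  match pselect (exists i, hitb x p nu t i) with
  | left h => Some (ex_minn h)
  | right _ => None
  end.

(* MinCoupler(nu, r) = x_{i^*}; None on the null set where i^* is undefined. *)
Definition MinCoupler (R : realType) (q : nat) (T : Type) (x : nat -> T -> 'I_q)
    (p : nat -> T -> R) (nu : 'I_q -> R) (t : T) : option 'I_q :=
  omap (fun i => x i t) (istar x p nu t).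

Definition Rset (R : realType) (q : nat) (T : Type) (x : nat -> T -> 'I_q)
    (p : nat -> T -> R) (mu : 'I_q -> R) (delta : R) : set T :=
  [set t | exists i, istar x p mu t = Some i /\ (1 - delta) * mu (x i t) <= p i t].

Definition condprob (R : realType) (d : measure_display) (T : measurableType d)
    (P : probability T R) (A B : set T) : R :=
  fine (P (A `&` B)) / fine (P B).

From HB Require Import structures.
From mathcomp Require Import all_boot all_order all_algebra.
From mathcomp Require Import boolp classical_sets reals constructive_ereal ereal.
From mathcomp Require Import measure lebesgue_measure.
From mathcomp Require Import cardinality fsbigop normedtype sequences.
From mathcomp Require Import ring lra zify.
Import Order.TTheory GRing.Theory Num.Theory.
Local Open Scope classical_set_scope.
Local Open Scope ring_scope.
Set Implicit Arguments. Unset Strict Implicit. Unset Printing Implicit Defensive.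

(* Seeds in R(mu, delta) have probability delta.  For a symbol a with
   upsilon(a) < (1 - delta) mu(a), consider the seeds whose first k samples
   exceed max(mu, upsilon), whose k-th sample is (a, p) with
   (1 - delta) mu(a) <= p <= mu(a), whose next m samples exceed upsilon, and
   whose following sample is accepted by upsilon with a symbol other than a.
   On such a seed MinCoupler(mu) = a lies in R(mu, delta) while
   MinCoupler(upsilon) <> a.  By independence each such event is a product,
   and summing the two geometric series over m and k gives
   delta mu(a) (1 - upsilon(a)) / M with M = sum_b max(mu(b), upsilon(b)) <= 2.
   Summing over a and dividing by delta yields the bound. *)

Lemma eseries_geometric (R : realType) (a z : R) : 0 <= z -> z < 1 ->
  (\sum_(k <oo) (a * z ^+ k)%:E = (a / (1 - z))%:E)%E.
Proof.
move=> z0 z1; apply: cvg_lim => //.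
apply: cvg_EFin; first by apply: nearW => n; rewrite /eseries /= sumEFin.
rewrite [X in X @ _ --> _](_ : _ = series (geometric a z)); last first.
  by apply/funext => n; rewrite /= /eseries /= sumEFin.
by apply: cvg_geometric_series; rewrite ger0_norm.
Qed.

Lemma measure_fin_trivIset d (R : realFieldType) (T : ringOfSetsType d)
    (mu : {content set T -> \bar R}) (I : finType) (D : pred I) (F : I -> set T) :
  (forall i, D i -> measurable (F i)) -> trivIset [set i | D i] F ->
  mu (\bigcup_(i in [set i | D i]) F i) = (\sum_(i | D i) mu (F i))%E.
Proof.
move=> mF tF; rewrite measure_fin_bigcup //; last exact: finite_finset.
rewrite (fsbigE [seq i <- index_enum I | D i]) ?filter_uniq ?index_enum_uniq //.
- by rewrite big_filter_cond; apply: eq_bigl => i; rewrite mem_setE /= andbb.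
- by move=> i /=; rewrite mem_filter => /andP [].
- by move=> i /= Di; rewrite mem_filter Di mem_index_enum.
Qed.

Lemma unif01_itv_cc (R : realType) (l u : R) : 0 <= l -> l <= u -> u <= 1 ->
  unif01 `[l, u] = (u - l)%:E.
Proof.
move=> l0 lu u1; rewrite /unif01 setIidl; last first.
  move=> r /=; rewrite !in_itv /= => /andP [lr ru].
  by rewrite (le_trans l0 lr) (le_trans ru u1).
by rewrite lebesgue_measure_itv /= lte_fin; case: ltgtP lu => // ->; rewrite subrr.
Qed.

Lemma unif01_itv_oy (R : realType) (c : R) : 0 <= c -> c <= 1 ->
  unif01 `]c, +oo[ = (1 - c)%:E.
Proof.
move=> c0 c1; rewrite /unif01.
have -> : `]c, +oo[ `&` `[0%R, 1%R] = `]c, 1%R]%classic.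
  apply/seteqP; split => r /=; rewrite !in_itv /= ?andbT.
    by move=> [-> /andP [_ ->]].
  by move=> /andP [cr ->]; rewrite (le_trans c0 (ltW cr)).
by rewrite lebesgue_measure_itv /= lte_fin; case: ltgtP c1 => // ->; rewrite subrr.
Qed.

Lemma unif01_set0 (R : realType) : unif01 (set0 : set R) = 0%:E.
Proof. by rewrite /unif01 set0I measure0. Qed.

Lemma simplex_le1 (R : realType) (q : nat) (nu : 'I_q -> R) a :
  in_simplex nu -> nu a <= 1.
Proof.
move=> [nu0 <-]; rewrite (bigD1 a) //= lerDl.
by apply: sumr_ge0 => b _; exact: nu0.
Qed.

Lemma simplex_sum_max (R : realType) (q : nat) (mu ups : 'I_q -> R) :
  in_simplex mu -> in_simplex ups -> 1 <= \sum_a Num.max (mu a) (ups a) <= 2.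
Proof.
move=> [mu0 mu1] [ups0 ups1]; apply/andP; split.
  by rewrite -[leLHS]mu1; apply: ler_sum => a _; rewrite le_max lexx.
rewrite (_ : 2 = \sum_a (mu a + ups a)); last by rewrite big_split /= mu1 ups1.
by apply: ler_sum => a _; rewrite ge_max lerDl lerDr mu0 ups0.
Qed.

Lemma half_gap_le (R : realType) (q : nat) (mu ups : 'I_q -> R) a :
  in_simplex mu -> in_simplex ups ->
  (1 - nu_max ups) / 2 <= (1 - ups a) / \sum_b Num.max (mu b) (ups b).
Proof.
move=> mu_simplex ups_simplex.
have /andP [M1 M2] := simplex_sum_max mu_simplex ups_simplex.
have ups_le_max : ups a <= nu_max ups by exact: le_bigmax.
have max_le1 : nu_max ups <= 1 by apply: bigmax_le => // b _; exact: simplex_le1.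
rewrite ler_pdivlMr ?(lt_le_trans ltr01) // mulrAC ler_pdivrMr //.
by nra.
Qed.

Lemma prod_ord_blocks (R : comPzRingType) (G : nat -> R) (A B C D : R) k m :
  (forall j, (j < k)%N -> G j = A) -> G k = B ->
  (forall j, (k < j <= k + m)%N -> G j = C) -> G (k + m).+1 = D ->
  \prod_(j < (k + m).+2) G j = A ^+ k * B * C ^+ m * D.
Proof.
move=> GA GB GC GD; rewrite -(big_mkord xpredT) big_nat_recr //= GD.
rewrite (@big_cat_nat _ _ _ k.+1) //=; last by lia.
rewrite big_nat_recr //= GB (eq_big_nat _ _ (F2 := fun _ => A)); last by move=> j /GA.
rewrite (@eq_big_nat _ _ _ k.+1 _ _ (fun _ => C)); last by move=> j jr; apply: GC; lia.
by rewrite !prodr_const_nat subn0 subSS addKn.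
Qed.

Section UniformSeed.
Variables (R : realType) (Q : nat) (d : measure_display) (T : measurableType d)
  (P : probability T R) (x : nat -> T -> 'I_Q.+1) (p : nat -> T -> R).
Hypothesis seedP : uniform_seed P x p.
(* The alphabet is nonempty, so that [ffun_ext] below has a default symbol. *)
Local Notation q := Q.+1.

Lemma natr_card_neq0 : q%:R != 0 :> R.
Proof. by rewrite pnatr_eq0. Qed.

Lemma inv_card_gt0_le1 : 0 < q%:R^-1 :> R /\ q%:R^-1 <= 1 :> R.
Proof. by rewrite invr_gt0 ltr0n invf_le1 ?ltr0n ?ler1n. Qed.

Lemma mean_1B (f : 'I_q -> R) : q%:R^-1 * \sum_b (1 - f b) = 1 - q%:R^-1 * \sum_b f b.
Proof. by rewrite sumrB sumr_const card_ord mulrBr mulVf ?mulr1 ?natr_card_neq0. Qed.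

Definition cylinder N (C : nat -> 'I_q -> set R) : set T :=
  [set t | forall k, (k < N)%N -> C k (x k t) (p k t)].

Lemma measurable_cylinder N C : (forall k a, measurable (C k a)) ->
  measurable (cylinder N C).
Proof.
have [mx [mp _]] := seedP; move=> mC; elim: N => [|N IH].
  by rewrite (_ : cylinder 0 C = setT) //; apply/seteqP; split => t //= _ k.
rewrite (_ : cylinder N.+1 C = cylinder N C `&`
   \bigcup_(a in [set: 'I_q]) (x N @^-1` [set a] `&` p N @^-1` C N a)).
  apply: measurableI => //; apply: fin_bigcup_measurable; first exact: finite_finset.
  by move=> a _; apply: measurableI => //; rewrite -[_ @^-1` _]setTI; exact: mp.
apply/seteqP; split => t /=.
  move=> Ct; split=> [k kN|]; first exact/Ct/ltnW.
  by exists (x N t) => //; split => //; apply: Ct.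
by move=> [Ct [a _ [/= <- CNt]]] k; rewrite ltnS leq_eqVlt => /predU1P [->|/Ct].
Qed.

Lemma cylinder_sub N N' C C' : (N' <= N)%N ->
  (forall j b, (j < N')%N -> C j b `<=` C' j b) -> cylinder N C `<=` cylinder N' C'.
Proof. by move=> N'N CC' t Ct j jN'; apply/CC'/Ct/(leq_trans jN' N'N). Qed.

Definition ffun_ext N (f : {ffun 'I_N -> 'I_q}) (k : nat) : 'I_q :=
  if insub k is Some i then f i else ord0.

Lemma ffun_extE N (f : {ffun 'I_N -> 'I_q}) (i : 'I_N) : ffun_ext f i = f i.
Proof. by rewrite /ffun_ext valK. Qed.

(* Split the cylinder according to the values of [x 0], ..., [x (N - 1)]
   and apply the finite-dimensional law of the seed to each piece. *)
Lemma measure_cylinder N C (u : nat -> 'I_q -> R) :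
  (forall k a, measurable (C k a)) -> (forall k a, unif01 (C k a) = (u k a)%:E) ->
  P (cylinder N C) = (\prod_(k < N) (q%:R^-1 * \sum_(a : 'I_q) u k a))%:E.
Proof.
move=> mC uC.
pose A (f : {ffun 'I_N -> 'I_q}) := [set t | forall k, (k < N)%N ->
   x k t = ffun_ext f k /\ C k (ffun_ext f k) (p k t)].
have mA f : measurable (A f).
  rewrite (_ : A f = cylinder N (fun k b => if b == ffun_ext f k then C k b else set0)).
    by apply: measurable_cylinder => k b; case: ifP.
  apply/seteqP; split => t /= At k kN.
    by have [-> ?] := At k kN; rewrite eqxx.
  by move: (At k kN); case: eqP => // ->.
have tA : trivIset [set f | xpredT f] A.
  move=> f g _ _ [t [Af Ag]]; apply/ffunP => i; rewrite -!ffun_extE.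
  by have [<- _] := Af i (ltn_ord i); have [<- _] := Ag i (ltn_ord i).
have -> : cylinder N C = \bigcup_(f in [set f | xpredT f]) A f.
  apply/seteqP; split => t /=.
    move=> Ct; exists [ffun i : 'I_N => x i t] => // k kN.
    by rewrite /ffun_ext insubT /= ffunE; split => //; exact: Ct.
  by move=> [f _ Aft] k kN; have [-> ?] := Aft k kN.
rewrite measure_fin_trivIset //=.
have [_ [_ lawP]] := seedP.
rewrite (eq_bigr (fun f => (\prod_(k < N) (q%:R^-1 * u k (ffun_ext f k)))%:E)); last first.
  move=> f _; apply: (eq_trans (lawP N (ffun_ext f) (fun k => C k (ffun_ext f k)) _)) => //.
  by rewrite -prodEFin; apply: eq_bigr => k _; rewrite uC.
rewrite sumEFin; congr EFin.
under [RHS]eq_bigr => k _ do rewrite mulr_sumr.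
by rewrite bigA_distr_bigA; apply: eq_bigr => f _; apply: eq_bigr => k _; rewrite ffun_extE.
Qed.

Lemma hitbE (nu : 'I_q -> R) t i : hitb x p nu t i = (p i t <= nu (x i t)).
Proof. exact/asboolP/idP. Qed.

Lemma istarP (nu : 'I_q -> R) t k : istar x p nu t = Some k <->
  (forall i, (i < k)%N -> ~~ hitb x p nu t i) /\ hitb x p nu t k.
Proof.
rewrite /istar; case: pselect => [h|nh]; last first.
  by split => // -[_ hk]; exfalso; apply: nh; exists k.
case: ex_minnP => m hm hmin; split.
  by move=> [<-]; split => // i im; apply: contraTN im => /hmin; rewrite -leqNgt.
move=> [hlt hk]; congr Some; apply/eqP; rewrite eqn_leq hmin //= leqNgt.
by apply: contraL hm => /hlt.
Qed.

Definition miss_then (nu : 'I_q -> R) k (L : 'I_q -> set R) : nat -> 'I_q -> set R :=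
  fun j b => if (j < k)%N then `]nu b, +oo[%classic else L b.

Lemma measurable_miss_then nu k L : (forall b, measurable (L b)) ->
  forall j b, measurable (miss_then nu k L j b).
Proof. by move=> mL j b; rewrite /miss_then; case: ifP. Qed.

Lemma cylinder_miss_then nu k L t : cylinder k.+1 (miss_then nu k L) t <->
  (forall i, (i < k)%N -> ~~ hitb x p nu t i) /\ L (x k t) (p k t).
Proof.
rewrite /cylinder /miss_then; split => /=.
  move=> Ct; split=> [i ik|]; last by have := Ct k (ltnSn k); rewrite ltnn.
  by have := Ct i (ltnW ik); rewrite ik /= in_itv /= andbT hitbE -ltNge.
move=> [missk Lk] i; rewrite ltnS leq_eqVlt => /predU1P [->|ik]; first by rewrite ltnn.
by rewrite ik /= in_itv /= andbT ltNge -hitbE missk.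
Qed.

Lemma istar_miss_then nu k L t : (forall b r, L b r -> r <= nu b) ->
  cylinder k.+1 (miss_then nu k L) t -> istar x p nu t = Some k.
Proof.
by move=> Lhit /cylinder_miss_then [missk /Lhit hitk]; apply/istarP; rewrite hitbE.
Qed.

Lemma trivIset_miss_then nu (L : nat -> 'I_q -> set R) :
  (forall k b r, L k b r -> r <= nu b) ->
  trivIset setT (fun k => cylinder k.+1 (miss_then nu k (L k))).
Proof.
move=> Lhit i j _ _ [t [Ci Cj]].
by have := istar_miss_then (Lhit i) Ci; rewrite (istar_miss_then (Lhit j) Cj) => -[].
Qed.

Definition accept_itv (mu : 'I_q -> R) delta k :=
  miss_then mu k (fun b => `[(1 - delta) * mu b, mu b]%classic).

Lemma Rset_bigcup mu delta :
  Rset x p mu delta = \bigcup_k cylinder k.+1 (accept_itv mu delta k).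
Proof.
apply/seteqP; split => t /=.
  move=> [k [/istarP [missk hitk] acck]]; exists k => //; apply/cylinder_miss_then.
  by split => //=; rewrite in_itv /= acck -hitbE.
move=> [k _ /cylinder_miss_then [missk]]; rewrite /= in_itv /= => /andP [accn hitk].
by exists k; split => //; apply/istarP; rewrite hitbE.
Qed.

Lemma measurable_Rset mu delta : measurable (Rset x p mu delta).
Proof.
rewrite Rset_bigcup; apply: bigcup_measurable => k _; apply: measurable_cylinder.
exact: measurable_miss_then.
Qed.

Lemma measure_accept_itv mu delta k : in_simplex mu -> 0 <= delta <= 1 ->
  P (cylinder k.+1 (accept_itv mu delta k)) = (q%:R^-1 * delta * (1 - q%:R^-1) ^+ k)%:E.
Proof.
move=> mu_simplex /andP [d0 d1]; have [mu0 mu1] := mu_simplex.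
rewrite (@measure_cylinder _ _ (fun j b => if (j < k)%N then 1 - mu b else delta * mu b)).
- congr EFin; rewrite big_ord_recr /= ltnn -mulr_sumr mu1.
  rewrite (eq_bigr (fun _ => 1 - q%:R^-1)) ?prodr_const ?card_ord; first ring.
  by move=> i _; rewrite ltn_ord mean_1B mu1 mulr1.
- exact: measurable_miss_then.
move=> j b; rewrite /accept_itv /miss_then; case: ifP => _.
  by rewrite unif01_itv_oy ?mu0 ?simplex_le1.
rewrite unif01_itv_cc ?simplex_le1 //.
- by congr EFin; ring.
- by rewrite mulr_ge0 ?subr_ge0.
- by have := mu0 b; nra.
Qed.

Lemma eseries_geometric_card (c : R) :
  (\sum_(k <oo) (c * (1 - q%:R^-1) ^+ k)%:E = (c * q%:R)%:E)%E.
Proof.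
have [q0 q1] := inv_card_gt0_le1.
rewrite eseries_geometric ?subr_ge0 ?gtrBl // (_ : 1 - _ = q%:R^-1) ?invrK //.
by rewrite opprB addrC subrK.
Qed.

Lemma measure_Rset mu delta : in_simplex mu -> 0 <= delta <= 1 ->
  P (Rset x p mu delta) = delta%:E.
Proof.
move=> mu_simplex d01; rewrite Rset_bigcup measure_semi_bigcup //.
- rewrite (eq_eseriesr (g := fun k => (q%:R^-1 * delta * (1 - q%:R^-1) ^+ k)%:E)) => [|k _];
    last exact: measure_accept_itv.
  by rewrite eseries_geometric_card mulrAC mulVf ?mul1r ?natr_card_neq0.
- by move=> k; apply: measurable_cylinder; exact: measurable_miss_then.
- by apply: trivIset_miss_then => k b r; rewrite /= in_itv /= => /andP [].
- by rewrite -Rset_bigcup; exact: measurable_Rset.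
Qed.

Lemma measurable_MinCoupler_Some nu a : measurable [set t | MinCoupler x p nu t = Some a].
Proof.
rewrite (_ : [set t | _] = \bigcup_j cylinder j.+1 (miss_then nu j
   (fun b => if b == a then `]-oo, nu b]%classic else set0))).
  apply: bigcup_measurable => j _; apply: measurable_cylinder.
  by apply: measurable_miss_then => b; case: ifP.
apply/seteqP; split => t /=; rewrite /MinCoupler.
  case istar_t: istar => [j|] //= [<-]; exists j => //; apply/cylinder_miss_then.
  by move/istarP: istar_t => [missj hitj]; rewrite eqxx /= in_itv /= -hitbE.
move=> [j _ /cylinder_miss_then [missj]]; case: eqP => // <-; rewrite /= in_itv /= => hitj.
by have /istarP -> : (forall i, (i < j)%N -> ~~ hitb x p nu t i) /\ hitb x p nu t j
  by rewrite hitbE.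
Qed.

Definition disagreement (mu ups : 'I_q -> R) :=
  [set t | MinCoupler x p mu t <> MinCoupler x p ups t].

Lemma measurable_disagreement mu ups delta :
  measurable (disagreement mu ups `&` Rset x p mu delta).
Proof.
rewrite (_ : _ `&` _ = Rset x p mu delta `\` \bigcup_(a in [set: 'I_q])
   ([set t | MinCoupler x p mu t = Some a] `&` [set t | MinCoupler x p ups t = Some a])).
  apply: measurableD; first exact: measurable_Rset.
  apply: fin_bigcup_measurable; first exact: finite_finset.
  by move=> a _; apply: measurableI; exact: measurable_MinCoupler_Some.
apply/seteqP; split => t /=.
  by move=> [neq Rt]; split => // -[a _ [/= mu_a ups_a]]; apply: neq; rewrite mu_a ups_a.
move=> [Rt notsame]; split => // same; have [k [istar_k _]] := Rt.
by apply: notsame; exists (x k t) => //=; rewrite -same /MinCoupler istar_k.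
Qed.

Definition other_hit (ups : 'I_q -> R) a b :=
  if b == a then set0 else `[0, ups b]%classic.

(* Step [k] is rejected by [ups] only when [ups a < (1 - delta) * mu a]. *)
Definition disagree_stage (mu ups : 'I_q -> R) delta a k m : nat -> 'I_q -> set R :=
  fun j b =>
  if (j < k)%N then `]Num.max (mu b) (ups b), +oo[%classic
  else if j == k then (if b == a then `[(1 - delta) * mu b, mu b]%classic else set0)
  else if (j <= k + m)%N then `]ups b, +oo[%classic
  else other_hit ups a b.

Definition disagree_path mu ups delta a k m :=
  cylinder (k + m).+2 (disagree_stage mu ups delta a k m).

Lemma disagree_path_accept mu ups delta a k m :
  disagree_path mu ups delta a k m `<=` cylinder k.+1 (accept_itv mu delta k).
Proof.
apply: cylinder_sub => [|j b jk]; first lia.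
rewrite /disagree_stage /accept_itv /miss_then.
case: (ltngtP j k) jk => [_ _ r|kj jk|_ _]; last by case: ifP => _ //; exact: sub0set.
  by rewrite /= !in_itv /= ?andbT => /(le_lt_trans _); apply; rewrite le_max lexx.
by lia.
Qed.

Lemma disagree_path_other_hit mu ups delta a k m :
  ups a < (1 - delta) * mu a ->
  disagree_path mu ups delta a k m `<=`
  cylinder (k + m).+2 (miss_then ups (k + m).+1 (other_hit ups a)).
Proof.
move=> ups_skip_a; apply: cylinder_sub => // j b _.
rewrite /disagree_stage /miss_then ltnS.
case: (leqP j (k + m)) => [_|kmj]; last first.
  have kj : (k < j)%N by lia.
  by rewrite ltnNge (ltnW kj) gtn_eqF // leqNgt kmj.
case: (ltnP j k) => [_ r|_].
  by rewrite /= !in_itv /= ?andbT => /(le_lt_trans _); apply; rewrite le_max lexx orbT.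
case: eqP => [_|_] //; case: eqP => [-> r|_]; last exact: sub0set.
by rewrite /= !in_itv /= ?andbT => /andP [+ _]; apply: lt_le_trans.
Qed.

Lemma disagree_path_spec mu ups delta a k m t :
  ups a < (1 - delta) * mu a -> disagree_path mu ups delta a k m t ->
  [/\ istar x p mu t = Some k, istar x p ups t = Some (k + m).+1,
      MinCoupler x p mu t = Some a, MinCoupler x p ups t <> Some a &
      Rset x p mu delta t].
Proof.
move=> ups_skip_a path_t.
have acc_t := disagree_path_accept path_t.
have ups_t := disagree_path_other_hit ups_skip_a path_t.
have istar_mu : istar x p mu t = Some k.
  by apply: istar_miss_then acc_t => b r; rewrite /= in_itv /= => /andP [].
have istar_ups : istar x p ups t = Some (k + m).+1.
  apply: istar_miss_then ups_t => b r; rewrite /other_hit.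
  by case: eqP => // _; rewrite /= in_itv /= => /andP [].
have x_k : x k t = a.
  have := path_t k ltac:(lia).
  by rewrite /disagree_stage ltnn eqxx; case: eqP.
have /cylinder_miss_then [_] := ups_t; rewrite /other_hit.
case: eqP => // x_other _; split => //.
- by rewrite /MinCoupler istar_mu /= x_k.
- by rewrite /MinCoupler istar_ups => -[].
- by rewrite Rset_bigcup; exists k.
Qed.

Lemma measurable_disagree_stage mu ups delta a k m j b :
  measurable (disagree_stage mu ups delta a k m j b).
Proof. by rewrite /disagree_stage /other_hit; repeat case: ifP. Qed.

Lemma measurable_disagree_path mu ups delta a k m :
  measurable (disagree_path mu ups delta a k m).
Proof. by apply: measurable_cylinder => j b; exact: measurable_disagree_stage. Qed.

Lemma measure_disagree_path mu ups delta a k m :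
  in_simplex mu -> in_simplex ups -> 0 <= delta <= 1 ->
  P (disagree_path mu ups delta a k m) =
  ((1 - q%:R^-1 * \sum_b Num.max (mu b) (ups b)) ^+ k * (q%:R^-1 * (delta * mu a))
   * (1 - q%:R^-1) ^+ m * (q%:R^-1 * (1 - ups a)))%:E.
Proof.
move=> mu_simplex ups_simplex /andP [d0 d1].
have [[mu0 mu1] [ups0 ups1]] := (mu_simplex, ups_simplex).
pose u j b := if (j < k)%N then 1 - Num.max (mu b) (ups b)
  else if j == k then (if b == a then delta * mu b else 0)
  else if (j <= k + m)%N then 1 - ups b
  else if b == a then 0 else ups b.
rewrite (@measure_cylinder _ _ u); first last.
- move=> j b; rewrite /disagree_stage /other_hit /u.
  have max_le1 : Num.max (mu b) (ups b) <= 1 by rewrite ge_max !simplex_le1.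
  case: ifP => _; first by rewrite unif01_itv_oy // le_max mu0.
  case: ifP => _; first case: eqP => _; rewrite ?unif01_set0 //.
    rewrite unif01_itv_cc ?simplex_le1 ?mulr_ge0 ?subr_ge0 //; first by congr EFin; ring.
    by have := mu0 b; nra.
  case: ifP => _; first by rewrite unif01_itv_oy ?simplex_le1.
  by case: eqP => _; rewrite ?unif01_set0 // unif01_itv_cc ?subr0 ?simplex_le1.
- by move=> j b; exact: measurable_disagree_stage.
congr EFin; apply: (@prod_ord_blocks _ (fun j => q%:R^-1 * \sum_b u j b))
  => [j jk||j /andP [kj jkm]|]; rewrite /u.
- by rewrite jk mean_1B.
- by rewrite ltnn eqxx -big_mkcond big_pred1_eq.
- by rewrite leq_gtF ?(ltnW kj) // gtn_eqF // jkm mean_1B ups1 mulr1.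
have k_lt_last : (k < (k + m).+1)%N by lia.
rewrite leq_gtF ?(ltnW k_lt_last) // gtn_eqF // ltnn.
congr (_ * _); rewrite -ups1 (bigD1 a) //= eqxx add0r [X in _ = X - _](bigD1 a) //=.
by rewrite addrC addrK; apply: eq_bigr => b /negbTE ->.
Qed.

Definition disagree_event mu ups delta a :=
  \bigcup_k \bigcup_m disagree_path mu ups delta a k m.

Lemma measurable_disagree_event mu ups delta a :
  measurable (disagree_event mu ups delta a).
Proof.
apply: bigcup_measurable => k _; apply: bigcup_measurable => m _.
exact: measurable_disagree_path.
Qed.

Lemma sum_max_le_card (mu ups : 'I_q -> R) : in_simplex mu -> in_simplex ups ->
  \sum_b Num.max (mu b) (ups b) <= q%:R.
Proof.
move=> mu_simplex ups_simplex; rewrite -[q in q%:R]card_ord -sumr_const.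
by apply: ler_sum => b _; rewrite ge_max !simplex_le1.
Qed.

Lemma measure_disagree_from mu ups delta a k :
  in_simplex mu -> in_simplex ups -> 0 <= delta <= 1 ->
  ups a < (1 - delta) * mu a ->
  P (\bigcup_m disagree_path mu ups delta a k m) =
  (delta * mu a * (1 - ups a) / q%:R
   * (1 - q%:R^-1 * \sum_b Num.max (mu b) (ups b)) ^+ k)%:E.
Proof.
move=> mu_simplex ups_simplex d01 ups_skip_a.
set A := 1 - _ * _.
rewrite measure_semi_bigcup => [||i j _ _ [t [path_i path_j]]|].
- rewrite (eq_eseriesr (g := fun m => (A ^+ k * (q%:R^-1 * (delta * mu a))
    * (q%:R^-1 * (1 - ups a)) * (1 - q%:R^-1) ^+ m)%:E)) => [|m _]; last first.
    by apply: eq_trans; [exact: measure_disagree_path | congr EFin; ring].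
  rewrite eseries_geometric_card; congr EFin.
  (* [field] would expand [q%:R] to [1 + Q%:R]; keep it an atom known to be nonzero. *)
  by move: (q%:R : R) natr_card_neq0 => n n0; field.
- by move=> m; exact: measurable_disagree_path.
- have [_ istar_i _ _ _] := disagree_path_spec ups_skip_a path_i.
  have [_ istar_j _ _ _] := disagree_path_spec ups_skip_a path_j.
  by move: istar_i; rewrite istar_j => -[/eqP]; rewrite eqn_add2l => /eqP.
- by apply: bigcup_measurable => m _; exact: measurable_disagree_path.
Qed.

Lemma measure_disagree_event mu ups delta a :
  in_simplex mu -> in_simplex ups -> 0 <= delta <= 1 ->
  ups a < (1 - delta) * mu a ->
  P (disagree_event mu ups delta a) =
  (delta * mu a * (1 - ups a) / \sum_b Num.max (mu b) (ups b))%:E.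
Proof.
move=> mu_simplex ups_simplex d01 ups_skip_a.
have [q0 _] := inv_card_gt0_le1.
set M := \sum_b _; have /andP [M1 _] := simplex_sum_max mu_simplex ups_simplex.
have M0 : M != 0 by rewrite gt_eqF // (lt_le_trans ltr01).
rewrite measure_semi_bigcup => [||i j _ _ [t [[m _ path_i] [m' _ path_j]]]|].
- rewrite (eq_eseriesr (g := fun k => (delta * mu a * (1 - ups a) / q%:R
    * (1 - q%:R^-1 * M) ^+ k)%:E)) => [|k _]; last exact: measure_disagree_from.
  rewrite eseries_geometric ?subr_ge0 ?gtrBl.
  + by congr EFin; move: (q%:R : R) natr_card_neq0 => n n0; field; rewrite M0 n0.
  + rewrite -[leRHS](mulVf natr_card_neq0) ler_pM2l //.
    exact: sum_max_le_card.
  + by rewrite mulr_gt0 // (lt_le_trans ltr01).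
- by move=> k; apply: bigcup_measurable => m _; exact: measurable_disagree_path.
- have [istar_i _ _ _ _] := disagree_path_spec ups_skip_a path_i.
  have [istar_j _ _ _ _] := disagree_path_spec ups_skip_a path_j.
  by move: istar_i; rewrite istar_j => -[].
- exact: measurable_disagree_event.
Qed.

Lemma measure_disagreement_ge mu ups delta :
  in_simplex mu -> in_simplex ups -> 0 <= delta <= 1 ->
  \sum_(a < q | ups a < (1 - delta) * mu a)
     (delta * mu a * (1 - ups a) / \sum_b Num.max (mu b) (ups b))
  <= fine (P (disagreement mu ups `&` Rset x p mu delta)).
Proof.
move=> mu_simplex ups_simplex d01.
set S := fun a => ups a < (1 - delta) * mu a.
set E := _ `&` _; have mE : measurable E := measurable_disagreement mu ups delta.
have sub : \bigcup_(a in [set a | S a]) disagree_event mu ups delta a `<=` E.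
  move=> t [a /= Sa [k _ [m _ /(disagree_path_spec Sa) [_ _ mu_a ups_a Rt]]]].
  by split => // same; apply: ups_a; rewrite -mu_a same.
have tH : trivIset [set a | S a] (disagree_event mu ups delta).
  move=> a b /= Sa Sb [t [[k _ [m _ path_a]] [k' _ [m' _ path_b]]]].
  have [_ _ mu_a _ _] := disagree_path_spec Sa path_a.
  have [_ _ mu_b _ _] := disagree_path_spec Sb path_b.
  by move: mu_a; rewrite mu_b => -[].
have mU : measurable (\bigcup_(a in [set a | S a]) disagree_event mu ups delta a).
  by apply: fin_bigcup_measurable => // a _; exact: measurable_disagree_event.
rewrite -lee_fin -sumEFin fineK; last first.
  by rewrite ge0_fin_numE // (le_lt_trans (probability_le1 P mE)) ?ltry.
apply: le_trans (le_measure P (mem_set mU) (mem_set mE) sub).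
rewrite measure_fin_trivIset //; last by move=> a _; exact: measurable_disagree_event.
apply: lee_sum => a Sa.
by rewrite -(measure_disagree_event mu_simplex ups_simplex d01 Sa).
Qed.

Lemma condprob_disagreement_ge mu ups delta :
  in_simplex mu -> in_simplex ups -> 0 < delta -> delta <= 1 ->
  condprob P (disagreement mu ups) (Rset x p mu delta)
  >= (1 - nu_max ups) / 2 * \sum_(a < q | ups a < (1 - delta) * mu a) mu a.
Proof.
move=> mu_simplex ups_simplex d0 d1; have d01 : 0 <= delta <= 1 by rewrite ltW.
rewrite /condprob measure_Rset //= ler_pdivlMr //.
apply: le_trans (measure_disagreement_ge mu_simplex ups_simplex d01).
rewrite mulr_sumr mulr_suml; apply: ler_sum => a _; set M := \sum_b _.
rewrite (_ : delta * mu a * (1 - ups a) / M = (1 - ups a) / M * mu a * delta); last by ring.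
apply: ler_wpM2r; first exact: ltW.
apply: ler_wpM2r; first exact: (proj1 mu_simplex).
exact: half_gap_le.
Qed.
End UniformSeed.

Theorem lemma6p2 (R : realType) (q : nat) (d : measure_display)
    (T : measurableType d) (P : probability T R)
    (x : nat -> T -> 'I_q) (p : nat -> T -> R)
    (mu upsilon : 'I_q -> R) (delta : R) :
  uniform_seed P x p ->
  in_simplex mu -> in_simplex upsilon ->
  0 < delta -> delta <= 1 ->
  condprob P [set t | MinCoupler x p mu t <> MinCoupler x p upsilon t]
             (Rset x p mu delta)
  >= (1 - nu_max upsilon) / 2 *
     \sum_(a < q | upsilon a < (1 - delta) * mu a) mu a.
Proof.
case: q x mu upsilon => [|Q] x mu upsilon seed mu_simplex ups_simplex.
  by case: mu_simplex => _; rewrite big_ord0 => /eqP; rewrite eq_sym oner_eq0.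
exact: condprob_disagreement_ge.
Qed.
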